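(* Let $k\ge n\ge 3$, and let $\pi$ assign to each $n$-element subset $S\subseteq[k]$ a string $\pi(S)$ of length $n$ that is an ordering of the elements of $S$, such that $d(\pi(S),\pi(S'))\le 3$ for all $n$-element subsets $S,S'\subseteq[k]$ with $|S\oplus S'|=2$. Then every set $R\subseteq[k]$ with $|R|=n-1$ satisfies at least one of: (1) there exists $A_R\subseteq R$ with $|A_R|=n-3$ such that $R$ freezes $A_R$; or (2) $R$ is semi-frozen.
   Context: $[k]=\{1,\dots,k\}$; $d$ is Hamming distance; $\pi(S)[i]$ is the letter at position $i\in[n]$ of $\pi(S)$; $\oplus$ is symmetric difference of sets. For a set $R\subseteq[k]$, $\mathcal U_R$ is the set of all sets $S\subseteq[k]$ with $R\subset S$ and $|S|=|R|+1$. For $|R|=n-1$ and $A_R\subseteq R$, $R$ freezes $A_R$ (with freezing function $g_R$) if there is a one-to-one map $g_R:A_R\to[n]$ such that $\pi(S)[g_R(a)]=a$ for all $a\in A_R$ and all $S\in\mathcal U_R$. A set $R$ with $|R|=n-1$ is semi-frozen with semi-freezing function $h_R$ and wildcard index $w_R$ if $h_R:R\to[n]$ is one-to-one, $w_R$ is the unique index of $[n]$ not in the image of $h_R$, and for every $r\in R$ and every $S\in\mathcal U_R$, either $\pi(S)[h_R(r)]=r$ or $\pi(S)[w_R]=r$. *)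

(* Letters [k] are modelled by 'I_k (0..k-1), positions [n] by 'I_n. *)
From mathcomp Require Import all_boot.
Set Implicit Arguments. Unset Strict Implicit. Unset Printing Implicit Defensive.

Definition hamming (n k : nat) (u v : 'I_n -> 'I_k) : nat :=
  #|[set i : 'I_n | u i != v i]|.

Definition symdiff_card (k : nat) (S S' : {set 'I_k}) : nat :=
  #|(S :\: S') :|: (S' :\: S)|.

Definition is_ordering (n k : nat) (S : {set 'I_k}) (s : 'I_n -> 'I_k) : Prop :=
  injective s /\ [set s i | i : 'I_n] = S.

Definition inU (k : nat) (R S : {set 'I_k}) : Prop :=
  R \proper S /\ #|S| = #|R|.+1.

Definition freezes (n k : nat) (pi : {set 'I_k} -> 'I_n -> 'I_k)
    (R A : {set 'I_k}) : Prop :=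
  #|R| = n.-1 /\ A \subset R /\
  exists g : 'I_k -> 'I_n,
    {in A &, injective g} /\
    forall a, a \in A -> forall S, inU R S -> pi S (g a) = a.

Definition semi_frozen (n k : nat) (pi : {set 'I_k} -> 'I_n -> 'I_k)
    (R : {set 'I_k}) : Prop :=
  #|R| = n.-1 /\
  exists (h : 'I_k -> 'I_n) (w : 'I_n),
    {in R &, injective h} /\
    (forall j : 'I_n, j \notin [set h r | r in R] <-> j = w) /\
    forall r, r \in R -> forall S, inU R S -> pi S (h r) = r \/ pi S w = r.

(* The members of U_R are the sets S = R + {x}, x outside R; in pi(S) exactly one
   position, the hole of S, carries the new letter x, and any two distinct members are
   at symmetric difference 2, hence their strings are at Hamming distance <= 3.
   Comparing two members position by position gives the local picture:
   - with the same hole they agree, or differ by one transposition (same_hole_swap);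
   - with different holes qB, qT, T arises from B by a cycle through both holes and at
     most one further position y, the partner (other_hole_cycle).
   Call a letter fixed if one position carries it in all members. If at least n-3
   letters of R are fixed, they are frozen by their positions (freeze_of_fixed).
   Otherwise at least three letters are unfixed, and this rigidifies U_R: members with
   a common hole coincide (same_hole_agree), and relative to a reference member S0 all
   genuine three-cycles share one partner w (wildcard_exists), since two different
   partners would interlock into a pair of opposite cycles that pins down an unfixed
   letter. Then each letter lies at its position in S0 (the letter at w in S0 at the
   hole q0 of S0) or at the wildcard w, which is semi-freezing
   (semi_frozen_of_wildcard). *)

From mathcomp Require Import all_boot zify.
Set Implicit Arguments. Unset Strict Implicit. Unset Printing Implicit Defensive.

Lemma subset_of_card (T : finType) (F : {set T}) m :
  m <= #|F| -> exists A : {set T}, A \subset F /\ #|A| = m.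
Proof.
move=> mF; exists [set x in take m (enum F)]; split.
  by apply/subsetP => x; rewrite inE => /mem_take; rewrite mem_enum.
rewrite cardsE; have /card_uniqP -> := take_uniq m (enum_uniq (mem F)).
by rewrite size_take -cardE; case: ltnP => // Fm; apply/eqP; rewrite eqn_leq Fm.
Qed.

Lemma hamming_le3_four n k (u v : 'I_n -> 'I_k) a b c d :
  hamming u v <= 3 ->
  a != b -> a != c -> a != d -> b != c -> b != d -> c != d ->
  u a != v a -> u b != v b -> u c != v c -> u d != v d -> False.
Proof.
rewrite /hamming => huv ab ac ad bc bd cd ua ub uc ud.
have sub : a |: (b |: (c |: [set d])) \subset [set i | u i != v i].
  by apply/subsetP => x; rewrite !inE => /or4P[] /eqP ->.
have := subset_leq_card sub.
rewrite !cardsU1 cards1 !inE (negbTE ab) (negbTE ac) (negbTE ad)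
  (negbTE bc) (negbTE bd) (negbTE cd) /=.
by move=> /leq_trans/(_ huv).
Qed.

Lemma card_split_pred (T : finType) (A : {set T}) (P : pred T) :
  #|[set x in A | P x]| + #|[set x in A | ~~ P x]| = #|A|.
Proof.
rewrite -(cardsID [set x | P x] A).
have -> : A :&: [set x | P x] = [set x in A | P x] by apply/setP => x; rewrite !inE.
by have -> : A :\: [set x | P x] = [set x in A | ~~ P x] by apply/setP => x; rewrite !inE andbC.
Qed.

Section Layer.
Variables (n k : nat) (pi : {set 'I_k} -> 'I_n -> 'I_k) (R : {set 'I_k}).
Hypothesis n_gt0 : 0 < n.
Hypothesis pi_ordering : forall S : {set 'I_k}, #|S| = n -> is_ordering S (pi S).
Hypothesis pi_close : forall S S' : {set 'I_k}, #|S| = n -> #|S'| = n ->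
  symdiff_card S S' = 2 -> hamming (pi S) (pi S') <= 3.
Hypothesis card_R : #|R| = n - 1.
Implicit Types (S T : {set 'I_k}) (i j p q y : 'I_n).

Definition in_UR S : bool := (R \proper S) && (#|S| == #|R|.+1).

Lemma in_URP S : reflect (inU R S) (in_UR S).
Proof. by apply: (iffP andP) => -[RS /eqP cardS]; split. Qed.

Lemma card_in_UR S : in_UR S -> #|S| = n.
Proof. by case/andP => _ /eqP ->; rewrite card_R subn1 prednK. Qed.

Lemma pi_inj S : in_UR S -> injective (pi S).
Proof. by move/card_in_UR/pi_ordering => []. Qed.

Lemma pi_mem S i : in_UR S -> pi S i \in S.
Proof.
move=> hS; have [_ imS] := pi_ordering (card_in_UR hS).
by rewrite -[in X in _ \in X]imS imset_f.
Qed.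

Lemma pi_onto S x : in_UR S -> x \in S -> exists i, pi S i = x.
Proof.
move=> hS; have [_ imS] := pi_ordering (card_in_UR hS).
rewrite -[in X in _ \in X -> _]imS; by case/imsetP => i _ ->; exists i.
Qed.

Lemma R_sub S : in_UR S -> R \subset S.
Proof. by case/andP => /properP[]. Qed.

Lemma pi_onto_R S x : in_UR S -> x \in R -> exists i, pi S i = x.
Proof. by move=> hS xR; apply: pi_onto (subsetP (R_sub hS) x xR). Qed.

Lemma in_UR_eq S x : in_UR S -> x \in S -> x \notin R -> S = x |: R.
Proof.
move=> hS xS xR; apply/eqP; rewrite eq_sym eqEcard.
rewrite subUset sub1set xS R_sub //=.
by case/andP: hS => _ /eqP ->; rewrite cardsU1 xR.
Qed.

Lemma hole_exists S : in_UR S -> exists q, pi S q \notin R.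
Proof.
move=> hS; case/andP: (hS) => /properP [_ [x xS xR]] _.
by have [i ei] := pi_onto hS xS; exists i; rewrite ei.
Qed.

Lemma hole_unique S q i : in_UR S -> pi S q \notin R -> pi S i \notin R -> i = q.
Proof.
move=> hS hq hi; apply: (pi_inj hS).
have : pi S i \in pi S q |: R by rewrite -(in_UR_eq hS (pi_mem q hS) hq) pi_mem.
by rewrite !inE (negbTE hi) orbF => /eqP.
Qed.

Lemma off_hole S q i : in_UR S -> pi S q \notin R -> i != q -> pi S i \in R.
Proof. by move=> hS hq; apply: contraNT => /(hole_unique hS hq) ->. Qed.

Lemma holes_differ S T qS qT : in_UR T ->
  pi S qS \notin R -> pi T qT \notin R -> qT != qS -> S != T.
Proof.
move=> hT hqS hqT; apply: contraNneq => ST; rewrite ST in hqS.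
by rewrite (hole_unique hT hqT hqS).
Qed.

Lemma hole_letter_private S T q i : in_UR S -> in_UR T -> S != T ->
  pi S q \notin R -> pi T i != pi S q.
Proof.
move=> hS hT ST hq; apply: contraNneq ST => e.
have hi : pi T i \notin R by rewrite e.
by rewrite (in_UR_eq hS (pi_mem q hS) hq) (in_UR_eq hT (pi_mem i hT) hi) e.
Qed.

Lemma relocate S T qS qT i : in_UR S -> in_UR T ->
  pi S qS \notin R -> pi T qT \notin R -> i != qT ->
  exists2 j, j != qS & pi S j = pi T i.
Proof.
move=> hS hT hqS hqT iqT; have TiR := off_hole hT hqT iqT.
have [j ej] := pi_onto_R hS TiR.
by exists j => //; apply: contraNneq hqS => <-; rewrite ej.
Qed.

(* Distinct members of U_R differ in exactly two letters, so their strings are close. *)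
Lemma in_UR_close S T : in_UR S -> in_UR T -> S != T -> hamming (pi S) (pi T) <= 3.
Proof.
move=> hS hT ST; apply: pi_close; rewrite ?card_in_UR //.
have [q hq] := hole_exists hS; have [q' hq'] := hole_exists hT.
rewrite /symdiff_card (in_UR_eq hS (pi_mem q hS) hq) (in_UR_eq hT (pi_mem q' hT) hq').
have xy : pi S q != pi T q' by rewrite eq_sym hole_letter_private.
suff -> : (pi S q |: R) :\: (pi T q' |: R) :|: ((pi T q' |: R) :\: (pi S q |: R))
          = [set pi S q; pi T q'] by rewrite cards2 xy.
apply/setP => z; rewrite !inE.
have [->|zx] := eqVneq z (pi S q); first by rewrite (negbTE xy) (negbTE hq).
have [->|zy] := eqVneq z (pi T q'); first by rewrite (negbTE hq').
by case: (z \in R).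
Qed.

Lemma moved_away S T i j : in_UR T -> pi S j = pi T i -> j != i -> pi S j != pi T j.
Proof. by move=> hT -> ji; rewrite (inj_eq (pi_inj hT)) eq_sym. Qed.

Definition swapped S T q p r := [/\ r != p, r != q, pi T p = pi S r, pi T r = pi S p &
  (forall i, i != q -> i != p -> i != r -> pi T i = pi S i)].

Lemma same_hole_swap S T q j : in_UR S -> in_UR T ->
  pi S q \notin R -> pi T q \notin R -> j != q ->
  pi T j = pi S j \/ exists r, swapped S T q j r.
Proof.
move=> hS hT hqS hqT jq.
have [|djT] := eqVneq (pi T j) (pi S j); [by left | right].
have ST : S != T by apply: contraNneq djT => ->.
have dist := in_UR_close hS hT ST; have iT := pi_inj hT.
have [r rq er] := relocate hS hT hqS hqT jq.
have rj : r != j by apply: contraNneq djT => rj; rewrite -er rj.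
have dq : pi S q != pi T q by rewrite eq_sym hole_letter_private.
have dj : pi S j != pi T j by rewrite eq_sym.
have dr := moved_away hT er rj.
have agree i : i != q -> i != j -> i != r -> pi T i = pi S i.
  move=> iq ij ir; apply/eqP; rewrite eq_sym; apply: contraT => di; exfalso.
  by apply: (hamming_le3_four dist (a:=q) (b:=j) (c:=r) (d:=i)) => //; rewrite eq_sym.
exists r; split => //.
have [l lq el] := relocate hS hT hqS hqT rq.
have [lj|lj] := eqVneq l j; first by rewrite -el lj.
have lr : l != r by apply: contraNneq dr => lr; rewrite -[in pi S r]lr el.
by move: (agree l lq lj lr); rewrite el => /iT/eqP; rewrite (negbTE lr).
Qed.

(* T arises from B by a cycle through the two holes: the letter at y in B moves
   into the hole qB, and, if y != qT, the letter at qT in B moves to y. *)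
Definition cycle_shape B T qB qT y := [/\ y != qB, pi T qB = pi B y,
  (forall i, i != qB -> i != qT -> i != y -> pi T i = pi B i) &
  (y != qT -> pi T y = pi B qT)].

Lemma other_hole_cycle B T qB qT : in_UR B -> in_UR T ->
  pi B qB \notin R -> pi T qT \notin R -> qT != qB ->
  exists y, cycle_shape B T qB qT y.
Proof.
move=> hB hT hqB hqT qTB; have BT := holes_differ hT hqB hqT qTB.
have dist := in_UR_close hB hT BT; have iT := pi_inj hT.
have qBT : qB != qT by rewrite eq_sym.
have [y yqB ey] := relocate hB hT hqB hqT qBT.
have dqB : pi B qB != pi T qB by rewrite eq_sym hole_letter_private.
have dqT : pi B qT != pi T qT by rewrite hole_letter_private // eq_sym.
have agree i : i != qB -> i != qT -> i != y -> pi T i = pi B i.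
  move=> iqB iqT iy; apply/eqP; rewrite eq_sym; apply: contraT => di; exfalso.
  have [yqT|yqT] := eqVneq y qT.
  - have [j jqB ej] := relocate hB hT hqB hqT iqT.
    have ji : j != i by apply: contraNneq di => jeq; rewrite -ej jeq.
    have jqT : j != qT by apply: contraNneq iqB => jqT; apply/eqP/iT; rewrite -ej jqT -yqT ey.
    have dj := moved_away hT ej ji.
    by apply: (hamming_le3_four dist (a:=qB) (b:=qT) (c:=i) (d:=j)) => //; rewrite eq_sym.
  - have dy : pi B y != pi T y by rewrite ey (inj_eq iT) eq_sym.
    by apply: (hamming_le3_four dist (a:=qB) (b:=qT) (c:=y) (d:=i)) => //; rewrite eq_sym.
exists y; split => // yqT.
have [l lqB el] := relocate hB hT hqB hqT yqT.
have [lqT|lqT] := eqVneq l qT; first by rewrite -el lqT.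
have ly : l != y by apply: contraNneq yqB => ly; apply/eqP/iT; rewrite -el ly ey.
by move: (agree l lqB lqT ly); rewrite el => /iT/eqP; rewrite (negbTE ly).
Qed.

(* If S' is S with positions p and r exchanged, any T sharing their hole q agrees
   with S off q, p and r: a second transposition would create four differences. *)
Lemma swap_same_hole S S' T q p r j : in_UR S -> in_UR S' -> in_UR T ->
  pi S q \notin R -> pi S' q \notin R -> pi T q \notin R -> p != q ->
  swapped S S' q p r -> j != q -> j != p -> j != r -> pi T j = pi S j.
Proof.
move=> hS hS' hT hqS hqS' hqT pq [rp rq e1 e2 agree'] jq jp jr.
have [<-|S'T] := eqVneq S' T; first exact: agree'.
case: (same_hole_swap hS hT hqS hqT jq) => [//|[r2 [r2j r2q e3 e4 agreeT]]].
exfalso; have iS := pi_inj hS.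
have dist : hamming (pi T) (pi S') <= 3 by rewrite in_UR_close // eq_sym.
have dq : pi T q != pi S' q := hole_letter_private q hS' hT S'T hqS'.
have dj : pi T j != pi S' j by rewrite e3 agree' // (inj_eq iS).
have dr2 : pi T r2 != pi S' r2.
  rewrite e4; have [r2p|r2p] := eqVneq r2 p; first by rewrite r2p e1 (inj_eq iS).
  have [r2r|r2r] := eqVneq r2 r; first by rewrite r2r e2 (inj_eq iS).
  by rewrite agree' // (inj_eq iS) eq_sym.
have [r2p|r2p] := eqVneq r2 p.
- have rr2 : r != r2 by rewrite r2p.
  have rj : r != j by rewrite eq_sym.
  have dr : pi T r != pi S' r by rewrite agreeT // e2 (inj_eq iS).
  by apply: (hamming_le3_four dist (a:=q) (b:=j) (c:=r2) (d:=r)) => //; rewrite eq_sym.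
- have pj : p != j by rewrite eq_sym.
  have pr2 : p != r2 by rewrite eq_sym.
  have dp : pi T p != pi S' p by rewrite agreeT // e1 (inj_eq iS) eq_sym.
  by apply: (hamming_le3_four dist (a:=q) (b:=j) (c:=r2) (d:=p)) => //; rewrite eq_sym.
Qed.

Lemma swap_other_hole S S' T q qT p r j : in_UR S -> in_UR S' -> in_UR T ->
  pi S q \notin R -> pi S' q \notin R -> pi T qT \notin R -> qT != q -> p != q ->
  swapped S S' q p r -> j != q -> j != p -> j != r -> pi T j = pi S j.
Proof.
move=> hS hS' hT hqS hqS' hqT qTq pq [rp rq e1 e2 agree'] jq jp jr.
have iS := pi_inj hS.
have [y [yq ey agT cyT]] := other_hole_cycle hS hT hqS hqT qTq.
have [y' [yq' ey' agT' _]] := other_hole_cycle hS' hT hqS' hqT qTq.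
have moved m : m != q -> pi S' m != pi S m -> [|| m == qT, m == y | m == y'].
  move=> mq; apply: contraR; rewrite !negb_or => /and3P[mqT my my'].
  by rewrite -(agT m mq mqT my) -(agT' m mq mqT my').
have dp : pi S' p != pi S p by rewrite e1 (inj_eq iS).
have dr : pi S' r != pi S r by rewrite e2 (inj_eq iS) eq_sym.
(* equal partners would leave only qT to cover both swapped positions *)
have yy' : y != y'.
  apply/eqP => yy'; rewrite -yy' in ey'.
  have py : p != y by apply: contraNneq dp => ->; rewrite -ey -ey'.
  have ry : r != y by apply: contraNneq dr => ->; rewrite -ey -ey'.
  have := moved p pq dp; rewrite -yy' (negbTE py) !orbF => /eqP pqT.
  have := moved r rq dr; rewrite -yy' (negbTE ry) !orbF => /eqP rqT.
  by move: rp; rewrite pqT rqT eqxx.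
(* the partner y is one of the swapped positions, as S and S' agree elsewhere *)
have ypr : (y == p) || (y == r).
  apply/negPn/negP; rewrite negb_or => /andP[yp yr]; move/eqP: yy'; apply.
  by apply: (pi_inj hS'); rewrite -ey' agree' // -ey.
have jy : j != y by case/orP: ypr => /eqP ->.
have [jqT|jqT] := eqVneq j qT; last exact: agT j jq jqT jy.
(* if j is the hole of T, T carries the letter of S at j at y, while S' does not *)
exfalso; have yqT : y != qT by rewrite -jqT eq_sym.
move: (cyT yqT); rewrite (agT' y yq yqT yy') -jqT.
case/orP: ypr => /eqP ->; [rewrite e1 | rewrite e2] => /iS ej;
  [move: jr | move: jp]; by rewrite ej eqxx.
Qed.

Definition fixed (c : 'I_k) : bool :=
  [exists i, [forall S, in_UR S ==> (pi S i == c)]].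

Lemma fixedP c : reflect (exists i, forall S, in_UR S -> pi S i = c) (fixed c).
Proof.
apply: (iffP existsP) => -[i hi]; exists i.
  by move=> S hS; apply/eqP; exact: (implyP (forallP hi S) hS).
by apply/forallP => S; apply/implyP => hS; rewrite hi.
Qed.

Section Reference.
Variables (S0 : {set 'I_k}) (q0 : 'I_n).
Hypotheses (hS0 : in_UR S0) (hq0 : pi S0 q0 \notin R).

Section ManyUnfixed.
Hypothesis unfixed3 : 3 <= #|[set c in R | ~~ fixed c]|.

Lemma mobile_position S u v : in_UR S -> exists j,
  [/\ pi S j \in R, pi S j != u, pi S j != v & exists2 T, in_UR T & pi T j != pi S j].
Proof.
move=> hS; set U := [set c in R | ~~ fixed c].
have : 0 < #|U :\: [set u; v]|.
  rewrite cardsD subn_gt0; apply: leq_ltn_trans unfixed3.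
  apply: leq_trans (subset_leq_card (subsetIr U _)) _.
  by rewrite cards2; case: (u != v).
case/card_gt0P => c; rewrite !inE negb_or => /andP[/andP[cu cv] /andP[cR nfc]].
have [j ej] := pi_onto_R hS cR; exists j; rewrite ej; split => //.
move: nfc; rewrite negb_exists => /forallP/(_ j).
by rewrite negb_forall => /existsP[T]; rewrite negb_imply => /andP[hT dT]; exists T.
Qed.

Lemma same_hole_agree S S' q i : in_UR S -> in_UR S' ->
  pi S q \notin R -> pi S' q \notin R -> i != q -> pi S' i = pi S i.
Proof.
move=> hS hS' hq hq' iq.
case: (same_hole_swap hS hS' hq hq' iq) => [//|[r swp]]; exfalso.
have [j [jR ji jr [T hT dT]]] := mobile_position (pi S i) (pi S r) hS.
move/eqP: dT; apply.
have jq : j != q by apply: contraNneq hq => <-.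
have ji' : j != i by apply: contraNneq ji => ->.
have jr' : j != r by apply: contraNneq jr => ->.
have [qT hqT] := hole_exists hT.
have [qTq|qTq] := eqVneq qT q.
  by rewrite qTq in hqT; exact: swap_same_hole hS hS' hT hq hq' hqT iq swp jq ji' jr'.
exact: swap_other_hole hS hS' hT hq hq' hqT qTq iq swp jq ji' jr'.
Qed.

Lemma cycles_interlock S S' p p' y y' : in_UR S -> in_UR S' ->
  pi S p \notin R -> pi S' p' \notin R -> p != q0 -> p' != q0 ->
  cycle_shape S0 S q0 p y -> cycle_shape S0 S' q0 p' y' -> y != p -> y' != y -> y = p'.
Proof.
move=> hS hS' hp hp' pq0 p'q0 [yq0 ey _ cy] [_ ey' ag' _] yp y'y.
have i0 := pi_inj hS0.
have [pp'|pp'] := eqVneq p p'.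
  exfalso; move/eqP: y'y; apply; apply: i0; rewrite -ey -ey'.
  by rewrite pp' in hp; apply: same_hole_agree hS hS' hp hp' _; rewrite eq_sym.
have SS' : S != S' by apply: holes_differ hS' hp hp' _; rewrite eq_sym.
have dist := in_UR_close hS hS' SS'.
have dq0 : pi S q0 != pi S' q0 by rewrite ey ey' (inj_eq i0) eq_sym.
have dp : pi S p != pi S' p by rewrite eq_sym; exact: hole_letter_private.
have dp' : pi S p' != pi S' p' by apply: hole_letter_private; rewrite // eq_sym.
apply/eqP; apply: contraT => yp'; exfalso.
have yy' : y != y' by rewrite eq_sym.
have dy : pi S y != pi S' y by rewrite (cy yp) ag' // (inj_eq i0) eq_sym.
by apply: (hamming_le3_four dist (a:=q0) (b:=p) (c:=p') (d:=y)) => //; rewrite eq_sym.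
Qed.

(* Two cycles exchanging hole and partner would force an unfixed letter to stay put. *)
Lemma no_opposite_cycles S1 S2 p y : in_UR S1 -> in_UR S2 ->
  pi S1 p \notin R -> pi S2 y \notin R -> p != q0 -> y != q0 -> y != p ->
  cycle_shape S0 S1 q0 p y -> cycle_shape S0 S2 q0 y p -> False.
Proof.
move=> hS1 hS2 hp hy pq0 yq0 yp c1 c2.
have [j [jR jp jy [T hT dT]]] := mobile_position (pi S0 p) (pi S0 y) hS0.
move/eqP: dT; apply.
have jq0 : j != q0 by apply: contraNneq hq0 => <-.
have jp' : j != p by apply: contraNneq jp => ->.
have jy' : j != y by apply: contraNneq jy => ->.
have [t ht] := hole_exists hT.
have [tq0|tq0] := eqVneq t q0.
  by rewrite tq0 in ht; exact: same_hole_agree hS0 hT hq0 ht jq0.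
have [yT cT] := other_hole_cycle hS0 hT hq0 ht tq0.
(* T is itself one of the two opposite cycles, so it moves neither p nor y away *)
have [jt jyT] : j != t /\ j != yT.
  have [yTy|yTy] := eqVneq yT y.
    have py : p != y by rewrite eq_sym.
    have yTp : yT != p by rewrite yTy.
    have pt := cycles_interlock hS2 hT hy ht yq0 tq0 c2 cT py yTp.
    by rewrite -pt yTy.
  have yt := cycles_interlock hS1 hT hp ht pq0 tq0 c1 cT yp yTy.
  have yTt : yT != t by rewrite -yt.
  have yyT : y != yT by rewrite eq_sym.
  have yTp := cycles_interlock hT hS1 ht hp tq0 pq0 cT c1 yTt yyT.
  by rewrite -yt yTp.
by case: cT => _ _ agT _; exact: agT.
Qed.

Definition wildcard_for w T q :=
  (forall i, i != w -> i != q -> i != q0 -> pi T i = pi S0 i) /\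
  (q0 != w -> q0 != q -> pi T q0 = pi S0 w).

Lemma wildcard_of_cycle T q y : cycle_shape S0 T q0 q y -> wildcard_for y T q.
Proof. by case=> _ ey ag _; split => [i iy iq iq0|_ _]; [apply: ag | apply: ey]. Qed.

Lemma wildcard_same_hole w T : in_UR T -> pi T q0 \notin R -> wildcard_for w T q0.
Proof.
move=> hT hq; split=> [i _ _ iq0|_]; last by rewrite eqxx.
exact: same_hole_agree hS0 hT hq0 hq iq0.
Qed.

Definition genuine T := [exists q, [exists y,
  [&& in_UR T, pi T q \notin R, q != q0, y != q & pi T q0 == pi S0 y]]].

(* A single wildcard serves all members of U_R: the common partner of all genuine
   three-cycles if there is one, and q0 otherwise. *)
Lemma wildcard_exists :
  exists w, forall T q, in_UR T -> pi T q \notin R -> wildcard_for w T q.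
Proof.
case: (boolP [exists T, genuine T]) => [/existsP[T1 /existsP[p1 /existsP[y1]]] | none].
  case/and5P => hT1 hp1 p1q0 y1p1 /eqP e1.
  have [y c1] := other_hole_cycle hS0 hT1 hq0 hp1 p1q0.
  have yy1 : y = y1 by case: c1 => _ ey _ _; move: e1; rewrite ey => /(pi_inj hS0).
  rewrite yy1 in c1; exists y1 => T q hT hq.
  have [qq0|qq0] := eqVneq q q0; first by rewrite qq0 in hq *; exact: wildcard_same_hole.
  have [yT cT] := other_hole_cycle hS0 hT hq0 hq qq0.
  have [<-|yTy1] := eqVneq yT y1; first exact: wildcard_of_cycle.
  (* a different partner makes T1 and T interlock into opposite cycles *)
  exfalso; have y1q := cycles_interlock hT1 hT hp1 hq p1q0 qq0 c1 cT y1p1 yTy1.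
  have yTq : yT != q by rewrite -y1q.
  have y1yT : y1 != yT by rewrite eq_sym.
  have yTp1 := cycles_interlock hT hT1 hq hp1 qq0 p1q0 cT c1 yTq y1yT.
  rewrite -y1q in hq cT qq0; rewrite yTp1 in cT.
  exact: no_opposite_cycles hT1 hT hp1 hq p1q0 qq0 y1p1 c1 cT.
exists q0 => T q hT hq.
have [qq0|qq0] := eqVneq q q0; first by rewrite qq0 in hq *; exact: wildcard_same_hole.
have [yT cT] := other_hole_cycle hS0 hT hq0 hq qq0.
(* without genuine three-cycles every partner is the hole itself *)
have yTq : yT = q.
  apply/eqP; apply: contraNT none => yTq; apply/existsP; exists T.
  apply/existsP; exists q; apply/existsP; exists yT.
  by rewrite hT hq qq0 yTq /=; case: cT => _ -> _ _.
rewrite yTq in cT; have [ag _] := wildcard_of_cycle cT.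
by split=> [i iq0 iq _|]; [exact: ag | rewrite eqxx].
Qed.
End ManyUnfixed.

Definition pos0 (r : 'I_k) : 'I_n := odflt q0 [pick i | pi S0 i == r].

Lemma pos0P r : r \in R -> pi S0 (pos0 r) = r.
Proof.
move=> rR; rewrite /pos0; case: pickP => [i /eqP //|none].
by have [i ei] := pi_onto_R hS0 rR; move: (none i); rewrite ei eqxx.
Qed.

Lemma pos0_hole r : r \in R -> pos0 r != q0.
Proof. by move=> rR; apply: contraNneq hq0 => <-; rewrite pos0P. Qed.

(* A set of fixed letters is frozen, by the positions they occupy in S0. *)
Lemma freeze_of_fixed (A : {set 'I_k}) : A \subset R -> {subset A <= fixed} -> freezes pi R A.
Proof.
move=> AR Afixed; split; first by rewrite card_R subn1.
split => //; exists pos0; split.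
  move=> a b aA bA e.
  by rewrite -(pos0P (subsetP AR a aA)) e pos0P // (subsetP AR b bA).
move=> a aA S /in_URP hS; have /fixedP[i hi] := Afixed a aA.
suff -> : pos0 a = i by rewrite hi.
by apply: (pi_inj hS0); rewrite hi // pos0P // (subsetP AR a aA).
Qed.

Section Wildcard.
Variable w : 'I_n.
Hypothesis w_wild : forall T q, in_UR T -> pi T q \notin R -> wildcard_for w T q.

Definition semi_map (r : 'I_k) : 'I_n := if r == pi S0 w then q0 else pos0 r.

Lemma semi_map_inj : {in R &, injective semi_map}.
Proof.
move=> r r' rR r'R; rewrite /semi_map.
case: eqVneq => [->|rw]; case: eqVneq => [->|r'w] //.
- by move=> e; move: (pos0_hole r'R); rewrite e eqxx.
- by move=> e; move: (pos0_hole rR); rewrite -e eqxx.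
- by move=> e; rewrite -(pos0P rR) e pos0P.
Qed.

Lemma semi_map_image j : j \notin [set semi_map r | r in R] <-> j = w.
Proof.
have wfree : w \notin [set semi_map r | r in R].
  apply/imsetP => -[r rR]; rewrite /semi_map; case: eqVneq => [rw wq0|rw ew].
    by move: rR; rewrite rw wq0 (negbTE hq0).
  by move: rw; rewrite ew pos0P ?eqxx.
suff -> : [set semi_map r | r in R] = [set~ w].
  by rewrite !inE negbK; split => [/eqP|->].
apply/eqP; rewrite eqEcard; apply/andP; split.
  by apply/subsetP => i ii; rewrite !inE; apply: contraNneq wfree => <-.
by rewrite cardsC1 card_ord card_in_imset ?card_R ?subn1 //; exact: semi_map_inj.
Qed.

Lemma semi_map_sound r T : r \in R -> in_UR T -> pi T (semi_map r) = r \/ pi T w = r.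
Proof.
move=> rR hT; have [q hq] := hole_exists hT.
have [agree atq0] := w_wild hT hq.
have [l el] := pi_onto_R hT rR.
have lq : l != q by apply: contraNneq hq => <-; rewrite el.
rewrite /semi_map; case: eqVneq => [rw|rw].
  have wq0 : w != q0 by apply: contraNneq hq0 => <-; rewrite -rw.
  have [q0q|q0q] := eqVneq q0 q; last by left; rewrite atq0 // eq_sym.
  right; have [lw|lw] := eqVneq l w; first by rewrite -lw.
  have lq0 : l != q0 by rewrite q0q.
  by move: el; rewrite agree // rw => /(pi_inj hS0) lw'; rewrite lw' eqxx in lw.
have pq0 := pos0_hole rR.
have pw : pos0 r != w by apply: contraNneq rw => <-; rewrite pos0P.
have [pq|pq] := eqVneq (pos0 r) q; last by left; rewrite agree // pos0P.
right; have [lw|lw] := eqVneq l w; first by rewrite -lw.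
have [lq0|lq0] := eqVneq l q0.
  have q0q : q0 != q by rewrite -pq eq_sym.
  have q0w : q0 != w by rewrite -lq0.
  by move: el; rewrite lq0 atq0 // => e; rewrite e eqxx in rw.
move: el; rewrite agree // -(pos0P rR) => /(pi_inj hS0) e.
by rewrite e pq eqxx in lq.
Qed.

Lemma semi_frozen_of_wildcard : semi_frozen pi R.
Proof.
split; first by rewrite card_R subn1.
exists semi_map, w; split; [exact: semi_map_inj | split; first exact: semi_map_image].
by move=> r rR S /in_URP hS; exact: semi_map_sound.
Qed.
End Wildcard.
End Reference.
End Layer.

Theorem lemma3p5 (k n : nat) (pi : {set 'I_k} -> 'I_n -> 'I_k) :
  3 <= n -> n <= k ->
  (forall S : {set 'I_k}, #|S| = n -> is_ordering S (pi S)) ->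
  (forall S S' : {set 'I_k}, #|S| = n -> #|S'| = n -> symdiff_card S S' = 2 ->
     hamming (pi S) (pi S') <= 3) ->
  forall R : {set 'I_k}, #|R| = n - 1 ->
    (exists A : {set 'I_k}, A \subset R /\ #|A| = n - 3 /\ freezes pi R A)
    \/ semi_frozen pi R.
Proof.
move=> n_ge3 n_le_k pi_ordering pi_close R card_R.
have n_gt0 : 0 < n by apply: leq_trans n_ge3.
(* U_R is nonempty, since |R| < n <= k; take a reference member S0 = x |: R *)
have [x xR] : exists x, x \notin R.
  have RT : #|R| < #|'I_k| by rewrite card_R card_ord subn1 (leq_trans _ n_le_k) ?ltn_predL.
  have /subsetPn[x _ xR] : ~~ ([set: 'I_k] \subset R).
    by apply: contraTN RT => /subset_leq_card; rewrite cardsT -leqNgt.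
  by exists x.
have hS0 : in_UR R (x |: R) by rewrite /in_UR properEcard subsetUr cardsU1 xR add1n ltnSn eqxx.
have [q0 hq0] := hole_exists n_gt0 pi_ordering card_R hS0.
(* either n - 3 letters of R are fixed and freeze, or three are unfixed *)
have [n3F|Fn3] := leqP (n - 3) #|[set c in R | fixed pi R c]|.
  left; have [A [AF cardA]] := subset_of_card n3F.
  have AR : A \subset R by apply: subset_trans AF _; apply/subsetP => c; rewrite inE => /andP[].
  exists A; split; [done | split; first done].
  apply: (freeze_of_fixed n_gt0 pi_ordering card_R q0 hS0 AR) => a /(subsetP AF).
  by rewrite inE => /andP[].
right.
have unfixed3 : 3 <= #|[set c in R | ~~ fixed pi R c]|.
  by have := card_split_pred R (fixed pi R); rewrite card_R; lia.
have [w w_wild] := wildcard_exists n_gt0 pi_ordering pi_close card_R hS0 hq0 unfixed3.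
exact: (semi_frozen_of_wildcard n_gt0 pi_ordering card_R hS0 hq0 (w := w) w_wild).
Qed.
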